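(* Let $n\ge 2$ and $\ln\hat q=[F_n(z_n)]^{-1}\ln z_n$. Then for every integer $2\le i\le n$, $$\frac{(\ln\hat q)_i}{\ln i}=\begin{cases}1,& i\text{ prime},\\0,& i\text{ not prime},\end{cases}$$ and consequently the number of primes $\le n$ is $\pi(n)=\sum_{i=2}^n \frac{(\ln\hat q)_i}{\ln i}$.
   Context: $z_n=(1,\dots,n)^T$; logarithms of vectors are entry-wise. For $1\le i\le n$, $e_{\bar i|n}\in\mathbb{R}^n$ has $k$-th entry $1$ if $i\mid k$, else $0$. For $2\le i\le n$, $f_{i|n}=\sum_{t=1}^{\lfloor \log_i n\rfloor} e_{\overline{i^t}|n}$, and $f_{1|n}=1_n$. $F_n(z_n)=[f_{1|n}\ \cdots\ f_{n|n}]\in\mathbb{R}^{n\times n}$, which is invertible. *)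

From Stdlib Require Import Reals.
From mathcomp Require Import all_boot.
Set Implicit Arguments. Unset Strict Implicit.

Definition sumR (m n : nat) (g : nat -> R) : R :=
  foldr (fun i acc => Rplus (g i) acc) R0 (iota m (n.+1 - m)).

Definition e_bar (i k : nat) : nat := (i %| k).

Definition f_vec (n i k : nat) : nat :=
  if i == 1 then 1
  else \sum_(1 <= t < (trunc_log i n).+1) e_bar (i ^ t) k.

(* F_n(z_n) as a function of (row k, column j), both 1-based in 1..n:
   column j is f_{j|n}. *)
Definition Fmat (n k j : nat) : R := INR (f_vec n j k).

Definition prime_pi (n : nat) : nat := count prime (iota 0 n.+1).

(* Column j of F_n(z_n) counts the powers j^t (t >= 1) dividing the row index
   k, so F_n(z_n) is lower unitriangular and every linear system with it has
   at most one solution.  For a prime p that count is the p-adic valuation of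
   k, and ln k = sum_p v_p(k) ln p; hence the vector with entry ln p at each
   prime p and 0 elsewhere solves F_n(z_n) x = ln z_n, and it is therefore
   ln q^. *)

From HB Require Import structures.
From Stdlib Require Import Reals Lra.
From mathcomp Require Import all_boot zify.

Fact RplusA : associative Rplus.
Proof. by move=> x y z; rewrite Rplus_assoc. Qed.

HB.instance Definition _ :=
  Monoid.isComLaw.Build R R0 Rplus RplusA Rplus_comm Rplus_0_l.

Lemma sumR_big m n g : sumR m n g = \big[Rplus/R0]_(m <= i < n.+1) g i.
Proof. by rewrite /sumR unlock. Qed.

Lemma INR_sum (I : Type) (r : seq I) (P : pred I) (F : I -> nat) :
  INR (\sum_(i <- r | P i) F i) = \big[Rplus/R0]_(i <- r | P i) INR (F i).
Proof. exact: (big_morph INR plus_INR). Qed.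

Lemma sum_leq_indicator T L : \sum_(1 <= t < T.+1) (t <= L : nat) = minn T L.
Proof.
elim: T => [|T IH]; first by rewrite big_geq // min0n.
by rewrite big_nat_recr //= IH; case: (leqP T.+1 L) => /=; lia.
Qed.

Section ColumnEntries.

Variable n : nat.

Lemma f_vec_count_powers j k L : j != 1 -> L <= trunc_log j n ->
  (forall t, 0 < t <= trunc_log j n -> (j ^ t %| k) = (t <= L)) ->
  f_vec n j k = L.
Proof.
move=> /negbTE j_neq1 L_le dvd_pow.
rewrite /f_vec j_neq1 (@eq_big_nat _ _ _ _ _ _ (fun t => (t <= L : nat))).
  by rewrite sum_leq_indicator; apply/minn_idPr.
by move=> t t_range; rewrite /e_bar dvd_pow.
Qed.

Lemma f_vec_prime p k : prime p -> 0 < k <= n -> f_vec n p k = logn p k.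
Proof.
move=> p_pr /andP[k_gt0 k_le_n]; have p_gt1 := prime_gt1 p_pr.
apply: f_vec_count_powers; first by rewrite neq_ltn p_gt1 orbT.
  apply: trunc_log_max => //; apply: leq_trans k_le_n.
  exact: dvdn_leq k_gt0 (pfactor_dvdnn p k).
by move=> t _; apply: pfactor_dvdn.
Qed.

Lemma f_vec_diag k : 0 < k <= n -> f_vec n k k = 1.
Proof.
move=> /andP[k_gt0 k_le_n]; have [->|k_neq1] := eqVneq k 1; first by [].
have k_gt1 : 1 < k by lia.
apply: f_vec_count_powers => //; first by apply: trunc_log_max; rewrite ?expn1.
move=> t /andP[t_gt0 _]; case: (leqP t 1) => [t_le1|t_gt1].
  by rewrite (_ : t = 1) ?expn1 ?dvdnn //; lia.
apply/negbTE/negP => /(dvdn_leq k_gt0).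
by rewrite -{2}(expn1 k) leq_exp2l // leqNgt t_gt1.
Qed.

Lemma f_vec_gt j k : 0 < k < j -> f_vec n j k = 0.
Proof.
move=> /andP[k_gt0 k_lt_j].
apply: f_vec_count_powers => //; first by rewrite neq_ltn ltnNge; lia.
move=> t /andP[t_gt0 _]; rewrite leqn0 gtn_eqF //.
apply/negbTE/negP => /(dvdn_leq k_gt0).
have : j ^ 1 <= j ^ t by rewrite leq_exp2l; lia.
by rewrite expn1; lia.
Qed.

End ColumnEntries.

Lemma ln_INR_logn m N : 0 < m <= N ->
  ln (INR m) = \big[Rplus/R0]_(1 <= j < N.+1) Rmult (INR (logn j m)) (ln (INR j)).
Proof.
elim/ltn_ind: m => m IH /andP[m_gt0 m_le_N].
have [m_le1|m_gt1] := leqP m 1.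
  rewrite (_ : m = 1); last by lia.
  by rewrite ln_1 big1 // => j _; rewrite logn1 Rmult_0_l.
pose p := pdiv m; have p_pr : prime p by apply: pdiv_prime.
have p_gt0 := prime_gt0 p_pr; have p_le_m : p <= m by apply: pdiv_leq; lia.
pose m' := m %/ p.
have m_eq : m = p * m' by rewrite mulnC divnK // pdiv_dvd.
have m'_gt0 : 0 < m' by rewrite divn_gt0.
have m'_lt_m : m' < m by rewrite ltn_Pdiv // prime_gt1.
rewrite (eq_bigr (fun j => Rplus (if j == p then ln (INR p) else R0)
                                 (Rmult (INR (logn j m')) (ln (INR j)))));
  last first.
  move=> j _; rewrite m_eq lognM // logn_prime // plus_INR.
  by case: eqP => [->|_] /=; lra.
rewrite big_split -big_mkcond big_nat1_eq /= -(IH m') //; last first.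
  by rewrite m'_gt0; lia.
rewrite (_ : 1 <= p < N.+1); last by rewrite prime_gt0 //=; lia.
by rewrite {1}m_eq mult_INR ln_mult //; apply: lt_0_INR; apply/ltP.
Qed.

Definition ln_if_prime (j : nat) : R := if prime j then ln (INR j) else R0.

Lemma Fmat_ln_if_prime n k : 0 < k <= n ->
  \big[Rplus/R0]_(1 <= j < n.+1) Rmult (Fmat n k j) (ln_if_prime j) = ln (INR k).
Proof.
move=> k_range; rewrite (@ln_INR_logn k n k_range).
apply: eq_big_nat => j _; rewrite /Fmat /ln_if_prime.
case p_pr: (prime j); first by rewrite f_vec_prime.
by rewrite lognE p_pr /= Rmult_0_r Rmult_0_l.
Qed.

Lemma lower_unitriangular_solution_unique n (A : nat -> nat -> R)
    (x y : nat -> R) :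
  (forall k j, 0 < k < j -> A k j = R0) ->
  (forall k, 0 < k <= n -> A k k = R1) ->
  (forall k, 0 < k <= n ->
     \big[Rplus/R0]_(1 <= j < n.+1) Rmult (A k j) (x j) =
     \big[Rplus/R0]_(1 <= j < n.+1) Rmult (A k j) (y j)) ->
  forall k, 0 < k <= n -> x k = y k.
Proof.
move=> A_upper A_diag A_xy; elim/ltn_ind=> k IH k_range.
have k_in : k \in index_iota 1 n.+1 by rewrite mem_index_iota; lia.
have off_diag_eq :
    \big[Rplus/R0]_(1 <= j < n.+1 | j != k) Rmult (A k j) (x j) =
    \big[Rplus/R0]_(1 <= j < n.+1 | j != k) Rmult (A k j) (y j).
  rewrite big_seq_cond [RHS]big_seq_cond; apply: eq_bigr.
  move=> j /andP[]; rewrite mem_index_iota => j_range j_neq_k.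
  have [j_lt_k|k_lt_j] := ltnP j k; first by rewrite IH //; lia.
  by rewrite A_upper ?Rmult_0_l //; lia.
have diag_eq := A_xy k k_range.
rewrite (bigD1_seq k) ?iota_uniq // off_diag_eq in diag_eq.
rewrite (bigD1_seq k) ?iota_uniq //= A_diag // !Rmult_1_l in diag_eq.
exact: Rplus_eq_reg_r diag_eq.
Qed.

Lemma ln_if_prime_ratio i : 1 < i ->
  Rdiv (ln_if_prime i) (ln (INR i)) = if prime i then R1 else R0.
Proof.
move=> i_gt1; rewrite /ln_if_prime; case: (prime i); last exact: Rmult_0_l.
apply: Rinv_r; apply: ln_neq_0.
  by apply: not_1_INR; lia.
by apply: lt_0_INR; apply/ltP; lia.
Qed.

Lemma prime_pi_sum n : 0 < n -> prime_pi n = \sum_(2 <= i < n.+1) prime i.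
Proof.
move=> n_gt0; rewrite /prime_pi -sum1_count big_mkcond.
by rewrite -(subn0 n.+1) -/(index_iota 0 n.+1) big_ltn // big_ltn.
Qed.

Theorem mainTheorem8 (n : nat) (lnq : nat -> R) :
  2 <= n ->
  (forall k, 1 <= k <= n ->
     sumR 1 n (fun j => Rmult (Fmat n k j) (lnq j)) = ln (INR k)) ->
  (forall i, 2 <= i <= n ->
     Rdiv (lnq i) (ln (INR i)) = (if prime i then R1 else R0)) /\
  INR (prime_pi n) = sumR 2 n (fun i => Rdiv (lnq i) (ln (INR i))).
Proof.
move=> n_ge2 lnq_sol.
have lnqE : forall i, 0 < i <= n -> lnq i = ln_if_prime i.
  apply: (@lower_unitriangular_solution_unique n (Fmat n)).
  - by move=> k j kj; rewrite /Fmat f_vec_gt.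
  - by move=> k k_range; rewrite /Fmat f_vec_diag.
  - by move=> k k_range; rewrite -sumR_big lnq_sol // Fmat_ln_if_prime.
have ratio : forall i, 2 <= i <= n ->
    Rdiv (lnq i) (ln (INR i)) = (if prime i then R1 else R0).
  by move=> i i_range; rewrite lnqE ?ln_if_prime_ratio //; lia.
split=> //.
rewrite (@prime_pi_sum n (ltnW n_ge2)) INR_sum sumR_big.
by apply: eq_big_nat => i i_range; rewrite ratio //; case: (prime i).
Qed.
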